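(* The subdivision construction is functorial: for every functor $f:C\to D$ between small categories, $Sd(f):Sd(C)\to Sd(D)$ as described below is a well-defined functor (independent of the choices of representatives and right inverses), $Sd(\mathrm{id}_C)=\mathrm{id}_{Sd(C)}$, and $Sd(g\circ f)=Sd(g)\circ Sd(f)$ for all functors $f:C\to D$, $g:D\to E$.
   Context: For a small category $C$: a $q$-simplex of the nerve $NC$ is a functor $X:[q]\to C$ ($[q]=\{0<\dots<q\}$), i.e. a chain of arrows $f_i:X_{i-1}\to X_i$, $1\le i\le q$; $q_X=q$. It is non-degenerate if no $f_i$ is an identity. $\Delta/C$ has all simplices as objects and as morphisms $X\to Y$ the order-preserving $\xi:[q_X]\to[q_Y]$ with $Y\circ\xi=X$, written $\xi_*$. For a $q$-simplex $X$ and surjective order-preserving $s:[q+1]\to[q]$ with order-preserving right inverses $d,d'$, the morphisms $d_*,d'_*:X\to X\circ s$ are elementary equivalent; $\sim$ is the smallest equivalence relation on morphisms of $\Delta/C$ compatible with composition containing these pairs; $[\Delta/C]$ is the quotient category with morphisms the classes $[\xi_*]$; $Sd(C)$ is its full subcategory on the non-degenerate simplices. For a simplex $X=(f_1,\dots,f_q)$, let $r(X)$ be the non-degenerate simplex obtained by deleting all identity arrows among the $f_i$, of dimension $p_X$ = number of non-identity $f_i$, and let $\alpha_X:[q_X]\to[p_X]$ be the surjective order-preserving map with $\alpha_X(i-1)=\alpha_X(i)$ iff $f_i$ is an identity, so $X=r(X)\circ\alpha_X$. For a functor $f:C\to D$, $Sd(f)$ sends an object $X$ of $Sd(C)$ to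 $r(f\circ X)$, and a morphism $[\xi_*]:X\to Y$ to $[(\alpha_{f\circ Y}\circ\xi\circ\sigma)_*]:r(f\circ X)\to r(f\circ Y)$, where $\sigma$ is an order-preserving right inverse of $\alpha_{f\circ X}$. *)

From Stdlib Require Import ClassicalEpsilon.
From mathcomp Require Import all_boot.

Set Implicit Arguments.
Unset Strict Implicit.
Unset Printing Implicit Defensive.

(* comp g f is g o f, meaningful when tgt f = src g.                         *)
Record Cat := MkCat {
  Ob : Type;
  Arr : Type;
  src : Arr -> Ob;
  tgt : Arr -> Ob;
  idc : Ob -> Arr;
  comp : Arr -> Arr -> Arr;
  src_id : forall a, src (idc a) = a;
  tgt_id : forall a, tgt (idc a) = a;
  src_comp : forall g f, tgt f = src g -> src (comp g f) = src f;
  tgt_comp : forall g f, tgt f = src g -> tgt (comp g f) = tgt g;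
  comp_id_r : forall f, comp f (idc (src f)) = f;
  comp_id_l : forall f, comp (idc (tgt f)) f = f;
  comp_assoc : forall h g f, tgt f = src g -> tgt g = src h ->
    comp h (comp g f) = comp (comp h g) f
}.

Record Functor (C D : Cat) := MkFunctor {
  fob : Ob C -> Ob D;
  farr : Arr C -> Arr D;
  f_src : forall f, src (farr f) = fob (src f);
  f_tgt : forall f, tgt (farr f) = fob (tgt f);
  f_id : forall a, farr (idc a) = idc (fob a);
  f_comp : forall g f, tgt f = src g -> farr (comp g f) = comp (farr g) (farr f)
}.

Definition Fid (C : Cat) : Functor C C :=
  @MkFunctor C C (fun a => a) (fun f => f)
    (fun _ => erefl) (fun _ => erefl) (fun _ => erefl) (fun _ _ _ => erefl).

Definition Fcomp (C D E : Cat) (G : Functor D E) (F : Functor C D) : Functor C E.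
Proof.
refine (@MkFunctor C E (fun a => fob G (fob F a)) (fun f => farr G (farr F f))
  _ _ _ _).
- by move=> f; rewrite f_src f_src.
- by move=> f; rewrite f_tgt f_tgt.
- by move=> a; rewrite f_id f_id.
- move=> g f H; rewrite f_comp // f_comp //.
  by rewrite f_tgt f_src H.
Defined.

(* Simplices of the nerve: a q-simplex is a chain of q composable arrows     *)
(* f_1, ..., f_q (f_i = nth (i-1)), together with its initial vertex X_0     *)
(* (needed when q = 0).  Raw data + validity predicate.                      *)
Record Simplex (C : Cat) := Smp { sv0 : Ob C; sarr : seq (Arr C) }.

Fixpoint chain (C : Cat) (a : Ob C) (s : seq (Arr C)) : Prop :=
  match s with
  | [::] => True
  | f :: s' => src f = a /\ chain (tgt f) s'
  end.

Definition is_simplex (C : Cat) (X : Simplex C) : Prop := chain (sv0 X) (sarr X).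

Definition dim (C : Cat) (X : Simplex C) : nat := size (sarr X).

Definition is_id (C : Cat) (f : Arr C) : Prop := exists a, f = idc a.

Definition nondeg (C : Cat) (X : Simplex C) : Prop :=
  is_simplex X /\ forall f, List.In f (sarr X) -> ~ is_id f.

(* f_i  (1 <= i <= q_X) *)
Definition arrow (C : Cat) (X : Simplex C) (i : nat) : Arr C :=
  nth (idc (sv0 X)) (sarr X) i.-1.

Definition vertex (C : Cat) (X : Simplex C) (i : nat) : Ob C :=
  if i is _.+1 then tgt (arrow X i) else sv0 X.

Fixpoint span_aux (C : Cat) (X : Simplex C) (a k : nat) : Arr C :=
  match k with
  | 0 => idc (vertex X a)
  | k'.+1 => comp (arrow X (a + k)) (span_aux X a k')
  end.

Definition span (C : Cat) (X : Simplex C) (a b : nat) : Arr C :=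
  span_aux X a (b - a).

(* X o xi, for xi : [p] -> [q_X] order preserving *)
Definition sprec (C : Cat) (X : Simplex C) (xi : nat -> nat) (p : nat) : Simplex C :=
  Smp (vertex X (xi 0)) [seq span X (xi i) (xi i.+1) | i <- iota 0 p].

Definition ordmap (p q : nat) (xi : nat -> nat) : Prop :=
  (forall i j, i <= j -> j <= p -> xi i <= xi j) /\ (forall i, i <= p -> xi i <= q).

(* xi_star : X -> Y is a morphism of Delta/C (xi is only relevant on [q_X]) *)
Definition is_mor (C : Cat) (X Y : Simplex C) (xi : nat -> nat) : Prop :=
  [/\ is_simplex X, is_simplex Y, ordmap (dim X) (dim Y) xi & sprec Y xi (dim X) = X].

(* The relation ~ on morphisms of Delta/C: the smallest equivalence relation *)
(* on parallel morphisms, compatible with composition, containing the        *)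
(* elementary equivalences (d_star, d'_star): X -> X o s. Two representing       *)
(* functions which agree on [q_X] denote the same morphism (sim_ext).        *)
Inductive sim (C : Cat) : Simplex C -> Simplex C -> (nat -> nat) -> (nat -> nat) -> Prop :=
| sim_ext X Y xi xi' :
    is_mor X Y xi -> (forall i, i <= dim X -> xi i = xi' i) -> sim X Y xi xi'
| sim_elem X s d d' :
    is_simplex X ->
    ordmap (dim X).+1 (dim X) s ->
    (forall j, j <= dim X -> exists2 i, i <= (dim X).+1 & s i = j) ->
    ordmap (dim X) (dim X).+1 d -> (forall j, j <= dim X -> s (d j) = j) ->
    ordmap (dim X) (dim X).+1 d' -> (forall j, j <= dim X -> s (d' j) = j) ->
    sim X (sprec X s (dim X).+1) d d'
| sim_sym X Y xi xi' : sim X Y xi xi' -> sim X Y xi' xi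
| sim_trans X Y xi1 xi2 xi3 : sim X Y xi1 xi2 -> sim X Y xi2 xi3 -> sim X Y xi1 xi3
| sim_postcomp X Y Z xi xi' eta :
    sim X Y xi xi' -> is_mor Y Z eta -> sim X Z (eta \o xi) (eta \o xi')
| sim_precomp W X Y eta xi xi' :
    is_mor W X eta -> sim X Y xi xi' -> sim W Y (xi \o eta) (xi' \o eta).

Definition idb (C : Cat) (f : Arr C) : bool :=
  if excluded_middle_informative (is_id f) then true else false.

Definition rS (C : Cat) (X : Simplex C) : Simplex C :=
  Smp (sv0 X) [seq f <- sarr X | ~~ idb f].

Definition alpha (C : Cat) (X : Simplex C) (i : nat) : nat :=
  count (fun f => ~~ idb f) (take i (sarr X)).

Definition fmapS (C D : Cat) (F : Functor C D) (X : Simplex C) : Simplex D :=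
  Smp (fob F (sv0 X)) (map (farr F) (sarr X)).

Definition sd_section (C D : Cat) (F : Functor C D) (X : Simplex C) (sg : nat -> nat) : Prop :=
  ordmap (dim (rS (fmapS F X))) (dim X) sg /\
  forall j, j <= dim (rS (fmapS F X)) -> alpha (fmapS F X) (sg j) = j.

(* Sd(F)[xi_star] = [(alpha_{F o Y} o xi o sg)_star] : r(F o X) -> r(F o Y) *)
Definition SdMor (C D : Cat) (F : Functor C D) (Y : Simplex C)
  (xi sg : nat -> nat) : nat -> nat :=
  fun j => alpha (fmapS F Y) (xi (sg j)).

From Pilot Require Import Defs.
From mathcomp Require Import all_boot zify.
From Stdlib Require Import Classical ClassicalEpsilon.

(* Sd(F) sends [xi_*] to [alpha_{F o Y} o xi o sg], and everything rests on one rigidity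
   fact: two morphisms [X -> W] of Delta/C whose composites with [alpha_W : W -> r(W)]
   agree are equivalent.  It is proved by induction on [dim W]: if the arrow f_(k+1) of W
   is an identity, then [skip k o squash k], which merges vertex k+1 into vertex k, is
   equivalent to the identity of W, so the question descends to the face of W omitting
   vertex k+1.  By rigidity any two sections of alpha are equivalent and
   [sg o alpha ~ id]; this gives independence of all choices, preservation of
   composition, and Sd(g o f) = Sd(g) o Sd(f) because sections of alpha compose. *)

Set Implicit Arguments.
Unset Strict Implicit.
Unset Printing Implicit Defensive.

Local Notation cmp := (@Defs.comp _).

Lemma chainP (C : Cat) (s : seq (Arr C)) (a : Ob C) (x0 : Arr C) :
  chain a s <-> forall i, i < size s ->
     src (nth x0 s i) = (if i is j.+1 then tgt (nth x0 s j) else a).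
Proof.
elim: s a => [|f s IH] a /=; first by split => // _ i.
rewrite IH; split.
- by case=> E H [|i] //= Hi; have := H i Hi; case: i {Hi}.
- move=> H; split; first exact: (H 0).
  by move=> i Hi; have := H i.+1 Hi; case: i {Hi}.
Qed.

Section Spans.
Variables (C : Cat) (X : Simplex C).

Lemma simplexP :
  is_simplex X <-> forall i, i < dim X -> src (arrow X i.+1) = vertex X i.
Proof.
rewrite /is_simplex (chainP _ _ (idc (sv0 X))).
by split => H i Hi; move: (H i Hi); case: i {Hi}.
Qed.

Lemma span_refl a : span X a a = idc (vertex X a).
Proof. by rewrite /span subnn. Qed.

Lemma spanS a c : a <= c -> span X a c.+1 = cmp (arrow X c.+1) (span X a c).
Proof. by move=> h; rewrite /span subSn //= addnS subnKC. Qed.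

Hypothesis HX : is_simplex X.

Lemma src_tgt_span a b : a <= b -> b <= dim X ->
  src (span X a b) = vertex X a /\ tgt (span X a b) = vertex X b.
Proof.
move: HX => /simplexP HX' hab; elim: b hab => [|b IH] hab hb.
  have -> : a = 0 by lia.
  by rewrite span_refl src_id tgt_id.
case: (ltnP b a) => hba.
  have -> : a = b.+1 by lia.
  by rewrite span_refl src_id tgt_id.
have [h1 h2] := IH hba (ltnW hb).
by rewrite spanS // src_comp ?tgt_comp // h2 HX'.
Qed.

Lemma span_trans a b c : a <= b -> b <= c -> c <= dim X ->
  span X a c = cmp (span X b c) (span X a b).
Proof.
move=> hab; elim: c => [|c IH] hbc hc.
  have -> : b = 0 by lia. have -> : a = 0 by lia.
  by rewrite span_refl; have := comp_id_l (idc (vertex X 0)); rewrite tgt_id.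
case: (ltnP c b) => hcb.
  have E : b = c.+1 by lia.
  subst b.
  by rewrite span_refl; have [_ <-] := src_tgt_span hab hc; rewrite comp_id_l.
have [_ h2] := src_tgt_span hab (leq_trans hcb (ltnW hc)).
have [h3 h4] := src_tgt_span hcb (ltnW hc).
rewrite spanS ?(leq_trans hab) // spanS // IH ?(ltnW hc) // comp_assoc ?h2 ?h3 //.
by rewrite h4; move/simplexP: HX => ->.
Qed.

Lemma span_arrow a : a < dim X -> span X a a.+1 = arrow X a.+1.
Proof.
move=> ha; rewrite spanS // span_refl.
have <- : src (arrow X a.+1) = vertex X a by move/simplexP: HX => ->.
by rewrite comp_id_r.
Qed.

End Spans.

Section Restriction.
Variables (C : Cat) (Y : Simplex C).

Lemma dim_sprec xi n : dim (sprec Y xi n) = n.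
Proof. by rewrite /dim /sprec /= size_map size_iota. Qed.

Lemma arrow_sprec xi n i : i < n ->
  arrow (sprec Y xi n) i.+1 = span Y (xi i) (xi i.+1).
Proof. by move=> h; rewrite /arrow /= (nth_map 0) ?size_iota // nth_iota. Qed.

Lemma eq_sprec a b n :
  vertex Y (a 0) = vertex Y (b 0) ->
  (forall i, i < n -> span Y (a i) (a i.+1) = span Y (b i) (b i.+1)) ->
  sprec Y a n = sprec Y b n.
Proof.
move=> h0 h; rewrite /sprec h0; congr Smp; apply/eq_in_map => i.
by rewrite mem_iota add0n => /andP [_ /h].
Qed.

Hypothesis HY : is_simplex Y.

Lemma sprec_id : sprec Y id (dim Y) = Y.
Proof.
case: Y HY => v s HY'; rewrite /sprec /=; congr Smp.
rewrite -{3}(mkseq_nth (idc v) s); apply/eq_in_map => i.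
by rewrite mem_iota add0n => /andP [_ hi]; rewrite span_arrow.
Qed.

Variables (xi : nat -> nat) (n : nat).
Hypothesis oxi : ordmap n (dim Y) xi.

Lemma vertex_sprec i : i <= n -> vertex (sprec Y xi n) i = vertex Y (xi i).
Proof.
have [mo bd] := oxi; case: i => [|j] //= hj.
rewrite arrow_sprec //.
by have [_ ->] := src_tgt_span HY (mo j j.+1 (leqnSn j) hj) (bd _ hj).
Qed.

Lemma sprec_simplex : is_simplex (sprec Y xi n).
Proof.
have [mo bd] := oxi; apply/simplexP; rewrite dim_sprec => i hi.
rewrite arrow_sprec // vertex_sprec ?(ltnW hi) //.
by have [-> _] := src_tgt_span HY (mo i i.+1 (leqnSn i) hi) (bd _ hi).
Qed.

Lemma span_sprec a b : a <= b -> b <= n ->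
  span (sprec Y xi n) a b = span Y (xi a) (xi b).
Proof.
have [mo bd] := oxi; elim: b => [|b IH] hab hb.
  have E : a = 0 by lia.
  by subst a; rewrite !span_refl vertex_sprec.
case: (ltnP b a) => hba.
  have E : a = b.+1 by lia.
  by subst a; rewrite !span_refl vertex_sprec.
rewrite spanS // IH ?(ltnW hb) // arrow_sprec //.
by rewrite [RHS](span_trans HY (b := xi b)) //; apply: mo || apply: bd; lia.
Qed.

Lemma sprec_comp eta m : ordmap m n eta ->
  sprec (sprec Y xi n) eta m = sprec Y (xi \o eta) m.
Proof.
move=> [mo bd]; rewrite {1}/sprec vertex_sprec ?bd //; congr Smp.
apply/eq_in_map => i; rewrite mem_iota add0n => /andP [_ hi].
by rewrite span_sprec //; apply: mo || apply: bd; lia.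
Qed.

End Restriction.

Lemma ordmap_comp p q r xi eta : ordmap p q xi -> ordmap q r eta -> ordmap p r (eta \o xi).
Proof.
move=> [m1 b1] [m2 b2]; split => [i j hij hj|i hi] /=.
  by apply: m2; [exact: m1 | exact: b1].
by apply: b2; exact: b1.
Qed.

Lemma ordmap_ext p q xi xi' : ordmap p q xi -> (forall i, i <= p -> xi i = xi' i) ->
  ordmap p q xi'.
Proof.
move=> [m b] h; split => [i j hij hj|i hi]; rewrite -!h //; try lia.
  exact: m.
exact: b.
Qed.

Section Morphisms.
Variable C : Cat.
Implicit Types X Y Z W : Simplex C.

Lemma is_mor_id X : is_simplex X -> is_mor X X id.
Proof. by move=> HX; split => //; exact: sprec_id. Qed.

Lemma is_mor_comp X Y Z xi eta :
  is_mor X Y xi -> is_mor Y Z eta -> is_mor X Z (eta \o xi).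
Proof.
move=> [HX HY o1 E1] [_ HZ o2 E2]; split => //; first exact: ordmap_comp o1 o2.
by rewrite -(sprec_comp HZ o2) // E2.
Qed.

Lemma is_mor_ext X Y xi xi' :
  is_mor X Y xi -> (forall i, i <= dim X -> xi i = xi' i) -> is_mor X Y xi'.
Proof.
move=> [HX HY o E] h; split => //; first exact: ordmap_ext h.
by rewrite -{2}E; apply: eq_sprec => [|i hi]; rewrite ?h //; lia.
Qed.

Lemma is_mor_elem X s d :
  is_simplex X -> ordmap (dim X).+1 (dim X) s ->
  ordmap (dim X) (dim X).+1 d -> (forall j, j <= dim X -> s (d j) = j) ->
  is_mor X (sprec X s (dim X).+1) d.
Proof.
move=> HX os od hsd; split => //; first exact: sprec_simplex.
  by rewrite dim_sprec.
rewrite sprec_comp // -[in RHS](sprec_id HX); apply: eq_sprec => [|i hi] /=.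
  by rewrite hsd.
by rewrite !hsd //; lia.
Qed.

Lemma sim_is_mor X Y xi xi' : sim X Y xi xi' -> is_mor X Y xi /\ is_mor X Y xi'.
Proof.
elim=> {X Y xi xi'}.
- by move=> X Y xi xi' H h; split => //; exact: is_mor_ext h.
- by move=> X s d d' HX os _ od hd od' hd'; split; exact: is_mor_elem.
- by move=> X Y xi xi' _ [].
- by move=> X Y xi1 xi2 xi3 _ [? _] _ [_ ?].
- by move=> X Y Z xi xi' eta _ [h1 h2] he; split; apply: is_mor_comp he.
- by move=> W X Y eta xi xi' he _ [h1 h2]; split; apply: is_mor_comp he _.
Qed.

Lemma sim_extr X Y xi xi' xi'' : sim X Y xi xi' ->
  (forall i, i <= dim X -> xi' i = xi'' i) -> sim X Y xi xi''.
Proof.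
by move=> h e; have [_ h2] := sim_is_mor h; apply: (sim_trans h); exact: sim_ext.
Qed.

Lemma sim_extl X Y xi xi' xi'' : sim X Y xi' xi ->
  (forall i, i <= dim X -> xi' i = xi'' i) -> sim X Y xi'' xi.
Proof. by move=> h e; apply/sim_sym/(sim_extr (sim_sym h)). Qed.

End Morphisms.

Section FunctorAction.
Variables (C D : Cat) (F : Functor C D).
Implicit Types X Y : Simplex C.

Lemma dim_fmapS X : dim (fmapS F X) = dim X.
Proof. by rewrite /dim /= size_map. Qed.

Lemma arrow_fmapS X i : arrow (fmapS F X) i = farr F (arrow X i).
Proof. by rewrite /arrow /= -f_id; elim: (sarr X) i.-1 => [|f s IH] [|j] /=. Qed.

Lemma vertex_fmapS X i : vertex (fmapS F X) i = fob F (vertex X i).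
Proof. by case: i => [|i] //=; rewrite arrow_fmapS f_tgt. Qed.

Lemma fmapS_simplex X : is_simplex X -> is_simplex (fmapS F X).
Proof.
move/simplexP=> H; apply/simplexP; rewrite dim_fmapS => i hi.
by rewrite arrow_fmapS vertex_fmapS f_src H.
Qed.

Lemma span_fmapS X a b : is_simplex X -> a <= b -> b <= dim X ->
  span (fmapS F X) a b = farr F (span X a b).
Proof.
move=> HX; elim: b => [|b IH] hab hb.
  have E : a = 0 by lia.
  by subst a; rewrite !span_refl vertex_fmapS f_id.
case: (ltnP b a) => hba.
  have E : a = b.+1 by lia.
  by subst a; rewrite !span_refl vertex_fmapS f_id.
rewrite !spanS // IH ?(ltnW hb) // arrow_fmapS f_comp //.
by have [_ ->] := src_tgt_span HX hba (ltnW hb); move/simplexP: HX => ->.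
Qed.

Lemma fmapS_sprec Y xi n : is_simplex Y -> ordmap n (dim Y) xi ->
  fmapS F (sprec Y xi n) = sprec (fmapS F Y) xi n.
Proof.
move=> HY [mo bd]; rewrite /fmapS /sprec /= -map_comp vertex_fmapS; congr Smp.
apply/eq_in_map => i; rewrite mem_iota add0n => /andP [_ hi] /=.
by rewrite span_fmapS //; apply: mo || apply: bd; lia.
Qed.

Lemma is_mor_fmapS X Y xi : is_mor X Y xi -> is_mor (fmapS F X) (fmapS F Y) xi.
Proof.
move=> [HX HY o E]; split; rewrite ?dim_fmapS //; try exact: fmapS_simplex.
by rewrite -fmapS_sprec // E.
Qed.

Lemma sim_fmapS X Y xi xi' : sim X Y xi xi' -> sim (fmapS F X) (fmapS F Y) xi xi'.
Proof.
elim=> {X Y xi xi'}.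
- move=> X Y xi xi' H h; apply: sim_ext; first exact: is_mor_fmapS.
  by rewrite dim_fmapS.
- move=> X s d d' HX os sur od hd od' hd'.
  rewrite fmapS_sprec // -(dim_fmapS X).
  by apply: sim_elem; rewrite ?dim_fmapS //; exact: fmapS_simplex.
- by move=> *; exact: sim_sym.
- by move=> *; apply: sim_trans; eassumption.
- by move=> X Y Z xi xi' eta _ h he; apply: sim_postcomp h _; exact: is_mor_fmapS.
- by move=> W X Y eta xi xi' he _ h; apply: sim_precomp _ h; exact: is_mor_fmapS.
Qed.

End FunctorAction.

Lemma fmapS_id (C : Cat) (X : Simplex C) : fmapS (Fid C) X = X.
Proof. by case: X => v s; rewrite /fmapS /= map_id. Qed.

Lemma fmapS_comp (C D E : Cat) (F : Functor C D) (G : Functor D E) (X : Simplex C) :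
  fmapS (Fcomp G F) X = fmapS G (fmapS F X).
Proof. by rewrite /fmapS /= -map_comp. Qed.

Section Reduction.
Variables (C : Cat).
Implicit Types X W : Simplex C.

Lemma idbP (f : Arr C) : reflect (is_id f) (idb f).
Proof. by rewrite /idb; case: excluded_middle_informative => h; constructor. Qed.

Lemma alpha0 X : alpha X 0 = 0.
Proof. by rewrite /alpha take0. Qed.

Lemma alphaS X i : i < dim X -> alpha X i.+1 = alpha X i + ~~ idb (arrow X i.+1).
Proof. by move=> hi; rewrite /alpha (take_nth (idc (sv0 X))) // -cats1 count_cat /= addn0. Qed.

Lemma alpha_mono X i j : i <= j -> alpha X i <= alpha X j.
Proof.
rewrite /alpha; elim: (sarr X) i j => [|x s IH] [|i] [|j] //= h.
by rewrite leq_add2l IH.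
Qed.

Lemma dim_rS X : dim (rS X) = alpha X (dim X).
Proof. by rewrite /dim /alpha /= take_size size_filter. Qed.

Lemma alpha_le_dim X i : alpha X i <= dim (rS X).
Proof.
rewrite dim_rS; case: (leqP i (dim X)) => h; first exact: alpha_mono.
by rewrite /alpha take_oversize ?take_size //; apply: ltnW.
Qed.

Lemma arrow_rS X i : i < dim X -> ~~ idb (arrow X i.+1) ->
  arrow (rS X) (alpha X i).+1 = arrow X i.+1.
Proof.
rewrite /arrow /alpha /dim /=; move: (idc _) => x0.
elim: (sarr X) i => [|f s IH] [|i] //= hi; first by move=> ->.
by case: (~~ idb f) => /=; exact: IH.
Qed.

Lemma rS_simplex X : is_simplex X -> is_simplex (rS X).
Proof.
rewrite /is_simplex /rS /=; elim: (sarr X) (sv0 X) => [|f s IH] a //= [hs hc].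
case: idbP => [[b Eb]|_] /=; last by split => //; apply: IH.
by apply: IH; move: hc hs; rewrite Eb tgt_id src_id => hc <-.
Qed.

Lemma is_id_arrow W k : is_simplex W -> k < dim W -> is_id (arrow W k.+1) ->
  arrow W k.+1 = idc (vertex W k) /\ vertex W k.+1 = vertex W k.
Proof.
move=> HW hk [b Eb].
have : src (arrow W k.+1) = vertex W k by move/simplexP: HW => ->.
rewrite Eb src_id => <-; split => //.
by rewrite /= Eb tgt_id.
Qed.

Lemma vertex_rS X i : is_simplex X -> i <= dim X -> vertex (rS X) (alpha X i) = vertex X i.
Proof.
move=> HX; elim: i => [|i IH] hi; first by rewrite alpha0.
rewrite alphaS //; case: idbP => [hid|hn].
  by rewrite addn0 IH ?(ltnW hi) // (proj2 (is_id_arrow HX hi hid)).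
by rewrite addn1 /= arrow_rS //; apply/idbP.
Qed.

Lemma alpha_flat_span X a b : is_simplex X -> a <= b -> b <= dim X ->
  alpha X a = alpha X b -> span X a b = idc (vertex X a) /\ vertex X b = vertex X a.
Proof.
move=> HX; elim: b => [|b IH] hab hb.
  have E : a = 0 by lia.
  by subst a; rewrite span_refl.
case: (ltnP b a) => hba.
  have E : a = b.+1 by lia.
  by subst a; rewrite span_refl.
rewrite alphaS // => he.
have hab' : alpha X a = alpha X b by have := alpha_mono X hba; move: he; case: (~~ _); lia.
have [IH1 IH2] := IH hba (ltnW hb) hab'.
have : idb (arrow X b.+1) by move: he; rewrite hab'; case: idb => //=; lia.
move/idbP/(is_id_arrow HX hb) => [Ea Ev].
rewrite spanS // IH1 Ea Ev IH2; split => //.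
by have := comp_id_l (idc (vertex X a)); rewrite tgt_id.
Qed.

Lemma alpha_step X a b j : a <= b -> b <= dim X ->
  alpha X a <= j < alpha X b -> exists m, [/\ a <= m < b, alpha X m = j & alpha X m.+1 = j.+1].
Proof.
elim: b => [|b IH] hab hb hj.
  have E : a = 0 by lia.
  by subst a; lia.
case: (ltnP b a) => hba.
  have E : a = b.+1 by lia.
  by subst a; lia.
case: (ltnP j (alpha X b)) => hjb.
  have [m [h1 h2 h3]] := IH hba (ltnW hb) (ltac:(lia)).
  by exists m; split => //; lia.
by exists b; move: hj; rewrite alphaS //; case: (~~ _) => /=; split; lia.
Qed.

Lemma alpha_attains X b j : b <= dim X -> j <= alpha X b -> exists2 i, i <= b & alpha X i = j.
Proof.
move=> hb hj; case: (ltnP j (alpha X b)) => h; last by exists b => //; lia.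
have [m [/andP [_ hm] hm1 _]] := @alpha_step X 0 b j (leq0n _) hb (ltac:(rewrite alpha0; lia)).
by exists m => //; lia.
Qed.

Lemma is_mor_alpha X : is_simplex X -> is_mor X (rS X) (alpha X).
Proof.
move=> HX; split => //; first exact: rS_simplex.
  by split => [i j hij _|i _]; [exact: alpha_mono | exact: alpha_le_dim].
rewrite -[X in _ = X](sprec_id HX) /sprec vertex_rS //; congr Smp.
apply/eq_in_map => i; rewrite mem_iota add0n => /andP [_ hi].
rewrite span_arrow // alphaS //; case: idbP => [hid|hn].
  by rewrite addn0 span_refl vertex_rS ?(ltnW hi) // (proj1 (is_id_arrow HX hi hid)).
rewrite addn1 span_arrow; first by rewrite arrow_rS //; apply/idbP.
  exact: rS_simplex.
by have := alpha_le_dim X i.+1; rewrite alphaS //; case: idbP => //= _; lia.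
Qed.

Definition alpha_section X (sg : nat -> nat) : Prop :=
  ordmap (dim (rS X)) (dim X) sg /\ forall j, j <= dim (rS X) -> alpha X (sg j) = j.

(* [sg j] is the least [i] with [alpha X i = j]; the second disjunct of [P] only makes
   [ex_minn] applicable for every [j]. *)
Lemma alpha_section_exists X : exists sg, alpha_section X sg.
Proof.
pose P j i := (alpha X i == j) || (alpha X (dim X) < j).
have exP j : exists i, P j i.
  case: (leqP j (alpha X (dim X))) => h; last by exists 0; rewrite /P h orbT.
  by have [i _ hi] := alpha_attains (leqnn _) h; exists i; rewrite /P hi eqxx.
exists (fun j => ex_minn (exP j)).
have least j : j <= dim (rS X) ->
   alpha X (ex_minn (exP j)) = j /\ forall i, alpha X i = j -> ex_minn (exP j) <= i.
  move=> hj; case: ex_minnP => m; rewrite /P -dim_rS ltnNge hj orbF => /eqP hm hmin.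
  by split => // i hi; apply: hmin; rewrite /P hi eqxx.
have bound j : j <= dim (rS X) -> ex_minn (exP j) <= dim X.
  move=> hj; have [_ h2] := least j hj.
  have [i hi /h2 hle] := alpha_attains (leqnn (dim X)) (ltac:(rewrite -dim_rS; exact: hj)).
  exact: leq_trans hle hi.
split; last by move=> j /least [].
split => // i j hij hj.
have [hj1 _] := least j hj.
have [k hk hk2] := alpha_attains (bound j hj) (ltac:(rewrite hj1; exact: hij)).
by apply: leq_trans hk; exact: (proj2 (least i (leq_trans hij hj))).
Qed.

Lemma is_mor_section X sg : is_simplex X -> alpha_section X sg -> is_mor (rS X) X sg.
Proof.
move=> HX [[mo bd] hs]; have HR := rS_simplex HX; split => //.
rewrite -[X in _ = X](sprec_id HR) /sprec.
have := alpha_flat_span HX (leq0n (sg 0)) (bd 0 (leq0n _)).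
rewrite alpha0 hs // => /(_ erefl) [_ ->].
congr Smp; apply/eq_in_map => j; rewrite mem_iota add0n => /andP [_ hj].
(* Exactly one non-identity arrow, at position [m.+1], lies between [sg j] and [sg j.+1]. *)
have [m [/andP [hm1 hm2] hm3 hm4]] :
    exists m, [/\ sg j <= m < sg j.+1, alpha X m = j & alpha X m.+1 = j.+1].
  by apply: alpha_step; rewrite ?mo ?bd ?hs //; lia.
have hmX : m < dim X by have := bd j.+1 hj; lia.
have [E1 V1] : span X (sg j) m = idc (vertex X (sg j)) /\ vertex X m = vertex X (sg j).
  by apply: alpha_flat_span => //; [lia | rewrite hm3 hs //; lia].
have [E2 _] : span X m.+1 (sg j.+1) = idc (vertex X m.+1) /\ vertex X (sg j.+1) = vertex X m.+1.
  by apply: alpha_flat_span => //; rewrite ?bd ?hm4 ?hs.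
have hn : ~~ idb (arrow X m.+1) by move: hm4; rewrite alphaS // hm3; case: (~~ _) => //=; lia.
rewrite (span_trans HX (b := m.+1)) ?bd //; try lia.
rewrite (span_trans HX (a := sg j) (b := m) (c := m.+1)) //; try lia.
rewrite span_arrow // E1 E2 -V1 span_arrow // -hm3 arrow_rS //.
have -> : vertex X m = src (arrow X m.+1) by move/simplexP: HX => ->.
by rewrite comp_id_r comp_id_l.
Qed.

Lemma alpha_id_of_nondeg W : (forall k, k < dim W -> ~ is_id (arrow W k.+1)) ->
  forall i, i <= dim W -> alpha W i = i.
Proof.
move=> H; elim=> [|i IH] hi; first exact: alpha0.
by rewrite alphaS // IH ?(ltnW hi) //; case: idbP => h; [case: (H i hi) | rewrite addn1].
Qed.

Lemma nondeg_arrow W : nondeg W -> forall k, k < dim W -> ~ is_id (arrow W k.+1).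
Proof.
case=> _ H k hk; apply: H; move: hk; rewrite /arrow /dim /=.
by elim: (sarr W) k => [|x s IH] [|k] //= hk; [left | right; exact: IH].
Qed.

Lemma nondeg_rS W : is_simplex W -> nondeg (rS W).
Proof.
move=> HW; split; first exact: rS_simplex.
by move=> f /List.filter_In [_] /negP; apply: contra_not => /idbP.
Qed.

Lemma rS_id W : nondeg W -> rS W = W.
Proof.
case: W => v s [_ H]; rewrite /rS /=; congr Smp; move: H => /=.
elim: s => //= f s IH H; case: idbP => h; first by case: (H f (or_introl erefl)).
by rewrite IH // => g hg; apply: H; right.
Qed.

End Reduction.

Definition skip (k j : nat) : nat := if j <= k then j else j.+1.
Definition squash (k i : nat) : nat := if i <= k then i else i.-1.

Ltac no_if t := lazymatch t with context [if _ then _ else _] => fail | _ => idtac end.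

Ltac lia_ifs :=
  rewrite /skip /squash /=;
  repeat (simpl; match goal with
  | |- context [if ?a <= ?b then _ else _] => no_if a; no_if b; case: (leqP a b) => ?
  | |- context [if ?a == ?b then _ else _] => no_if a; no_if b; case: (@eqP nat a b) => ?
  end); try lia.

Lemma ordmap_skip k n : ordmap n n.+1 (skip k).
Proof. by split => [i j hij hj|i hi]; lia_ifs. Qed.

Lemma ordmap_squash k n : k <= n -> ordmap n.+1 n (squash k).
Proof. by move=> hk; split => [i j hij hj|i hi]; lia_ifs. Qed.

Lemma skip_squash k x : skip k (squash k x) = if x == k.+1 then k else x.
Proof. by lia_ifs. Qed.

Section Degeneracy.
Variables (C : Cat) (W : Simplex C) (k : nat).
Hypotheses (HW : is_simplex W) (hk : k < dim W) (hid : is_id (arrow W k.+1)).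

Lemma vertex_squash x : vertex W x = vertex W (skip k (squash k x)).
Proof.
by rewrite skip_squash; case: eqP => // ->; rewrite (proj2 (is_id_arrow HW hk hid)).
Qed.

Lemma span_squash x y : x <= y -> y <= dim W ->
  span W x y = span W (skip k (squash k x)) (skip k (squash k y)).
Proof.
move=> hxy hy; have [Ea Ev] := is_id_arrow HW hk hid.
have Hs : span W k k.+1 = idc (vertex W k) by rewrite span_arrow.
rewrite !skip_squash; case: eqP => hx; case: eqP => hy2.
- by subst; rewrite !span_refl Ev.
- subst x; rewrite (span_trans HW (a := k) (b := k.+1)) //; try lia.
  by rewrite Hs -Ev; have [<- _] := src_tgt_span HW hxy hy; rewrite comp_id_r.
- subst y; rewrite (span_trans HW (b := k)) //; try lia.
  have hxk : x <= k by lia.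
  by rewrite Hs; have [_ <-] := src_tgt_span HW hxk (ltnW hk); rewrite comp_id_l.
- by [].
Qed.

Lemma eq_sprec_squash a b n : ordmap n (dim W) a -> ordmap n (dim W) b ->
  (forall i, i <= n -> squash k (a i) = squash k (b i)) -> sprec W a n = sprec W b n.
Proof.
move=> [ma ba] [mb bb] h; apply: eq_sprec => [|i hi].
  by rewrite vertex_squash h // -vertex_squash.
rewrite span_squash ?ma ?ba ?h ?(ltnW hi) //; try lia.
by rewrite -span_squash ?mb ?bb //; lia.
Qed.

(* Postcompose the elementary equivalence [skip k.+1 ~ skip k] (both sections of
   [squash k.+1]) with [squash k]. *)
Lemma sim_skip_squash : sim W W (skip k \o squash k) id.
Proof.
set N := dim W.
have Hel : sim W (sprec W (squash k.+1) N.+1) (skip k.+1) (skip k).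
  apply: sim_elem => //; rewrite -/N.
  - exact: ordmap_squash hk.
  - by move=> j hj; exists (skip k.+1 j); lia_ifs.
  - exact: ordmap_skip.
  - by move=> j hj; lia_ifs.
  - exact: ordmap_skip.
  - by move=> j hj; lia_ifs.
have Ms : is_mor (sprec W (squash k.+1) N.+1) W (squash k).
  have os : ordmap N.+1 N (squash k) by apply: ordmap_squash; lia.
  split; rewrite ?dim_sprec //; first exact/sprec_simplex/ordmap_squash.
  by apply: eq_sprec_squash => // [|i hi]; [exact: ordmap_squash | lia_ifs].
apply: (sim_extl (sim_extr (sim_postcomp Hel Ms) _)) => i hi; lia_ifs.
Qed.

Lemma sim_skip_squash_comp X xi : is_mor X W xi -> sim X W (skip k \o (squash k \o xi)) xi.
Proof. by move=> M; apply: (sim_extl (sim_extr (sim_precomp M sim_skip_squash) _)). Qed.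

Definition face := sprec W (skip k) (dim W).-1.

Let dimW_pred : (dim W).-1.+1 = dim W.
Proof. by rewrite prednK // (leq_ltn_trans (leq0n k) hk). Qed.

Let ordmap_skip_face : ordmap (dim W).-1 (dim W) (skip k).
Proof. by rewrite -{2}dimW_pred; exact: ordmap_skip. Qed.

Let ordmap_squash_face : ordmap (dim W) (dim W).-1 (squash k).
Proof. by rewrite -{1}dimW_pred; apply: ordmap_squash; lia. Qed.

Lemma face_simplex : is_simplex face.
Proof. exact: sprec_simplex. Qed.

Lemma dim_face : dim face = (dim W).-1.
Proof. exact: dim_sprec. Qed.

Lemma is_mor_skip : is_mor face W (skip k).
Proof. by split; rewrite ?dim_face //; exact: face_simplex. Qed.

Lemma is_mor_squash : is_mor W face (squash k).
Proof.
split; rewrite ?dim_face //; first exact: face_simplex.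
rewrite (sprec_comp HW ordmap_skip_face ordmap_squash_face) -[X in _ = X]sprec_id //.
apply: eq_sprec_squash => [|//|i hi]; first exact: ordmap_comp ordmap_squash_face ordmap_skip_face.
by lia_ifs.
Qed.

Lemma arrow_face j : j < (dim W).-1 ->
  arrow face j.+1 = arrow W (if j < k then j.+1 else j.+2).
Proof.
move=> hj; have [mo bd] := ordmap_skip_face.
rewrite arrow_sprec // span_squash ?mo ?bd //.
case: ltnP => hjk /=; rewrite -span_arrow //; try lia.
  by congr span; lia_ifs.
by rewrite (span_squash (x := j.+1)) //; try lia; congr span; lia_ifs.
Qed.

Lemma alpha_face i : i <= dim W -> alpha face (squash k i) = alpha W i.
Proof.
elim: i => [|i IH] hi; first by rewrite !alpha0.
rewrite alphaS // -IH ?(ltnW hi) //.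
case: (ltngtP i k) => hik.
- have -> : squash k i.+1 = (squash k i).+1 by lia_ifs.
  have -> : squash k i = i by lia_ifs.
  by rewrite alphaS ?dim_face ?arrow_face ?hik //; lia.
- have -> : squash k i.+1 = (squash k i).+1 by lia_ifs.
  have -> : squash k i = i.-1 by lia_ifs.
  rewrite alphaS ?dim_face ?arrow_face; try lia.
  have -> : (i.-1 < k) = false by lia.
  by have -> : i.-1.+2 = i.+1 by lia.
- subst i; have -> : squash k k.+1 = squash k k by lia_ifs.
  by move/idbP: hid => ->; rewrite addn0.
Qed.

End Degeneracy.

Section Rigidity.
Variable C : Cat.
Implicit Types X W : Simplex C.

Lemma sim_of_alpha_eq_nondeg W X xi xi' :
  (forall k, k < dim W -> ~ is_id (arrow W k.+1)) ->
  is_mor X W xi -> is_mor X W xi' ->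
  (forall i, i <= dim X -> alpha W (xi i) = alpha W (xi' i)) -> sim X W xi xi'.
Proof.
move=> H M1 M2 ha; apply: sim_ext => // i hi.
have [_ _ [_ b1] _] := M1; have [_ _ [_ b2] _] := M2.
by rewrite -(alpha_id_of_nondeg H (b1 i hi)) -(alpha_id_of_nondeg H (b2 i hi)) ha.
Qed.

Lemma sim_of_alpha_eq W X xi xi' : is_simplex W ->
  is_mor X W xi -> is_mor X W xi' ->
  (forall i, i <= dim X -> alpha W (xi i) = alpha W (xi' i)) -> sim X W xi xi'.
Proof.
move=> HW; have [N hN] : exists N, dim W <= N by exists (dim W).
elim: N W HW hN X xi xi' => [|N IH] W HW hN X xi xi' M1 M2 ha;
  case: (classic (exists k, k < dim W /\ is_id (arrow W k.+1))) => [[k [hk hid]]|hno];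
  try (by lia); try (by apply: sim_of_alpha_eq_nondeg => // k hk hid; apply: hno; exists k).
have [_ _ [_ b1] _] := M1; have [_ _ [_ b2] _] := M2.
have Ms := is_mor_squash HW hk hid.
have Sface : sim X (face W k) (squash k \o xi) (squash k \o xi').
  apply: IH; rewrite ?dim_face; try lia.
  - exact: face_simplex.
  - exact: is_mor_comp M1 Ms.
  - exact: is_mor_comp M2 Ms.
  - by move=> i hi /=; rewrite !alpha_face ?b1 ?b2 //; exact: ha.
apply: sim_trans (sim_sym (sim_skip_squash_comp HW hk hid M1)) _.
apply: sim_trans (sim_postcomp Sface (is_mor_skip HW hk)) _.
exact: sim_skip_squash_comp.
Qed.

Lemma sim_alpha_section W sg sg' : is_simplex W ->
  alpha_section W sg -> alpha_section W sg' -> sim (rS W) W sg sg'.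
Proof.
move=> HW S S'; apply: sim_of_alpha_eq (is_mor_section HW S) (is_mor_section HW S') _ => //.
by move=> j hj; rewrite (proj2 S) ?(proj2 S').
Qed.

Lemma sim_section_alpha W sg : is_simplex W -> alpha_section W sg ->
  sim W W (sg \o alpha W) id.
Proof.
move=> HW S; apply: sim_of_alpha_eq => //.
- exact: is_mor_comp (is_mor_alpha HW) (is_mor_section HW S).
- exact: is_mor_id.
- by move=> i hi /=; rewrite (proj2 S) // alpha_le_dim.
Qed.

End Rigidity.

Section FunctorReduction.
Variables (D E : Cat) (G : Functor D E).

Lemma idb_farr f : idb f -> idb (farr G f).
Proof. by move/idbP=> [a ->]; apply/idbP; exists (fob G a); exact: f_id. Qed.

Lemma rS_fmapS_rS V : rS (fmapS G (rS V)) = rS (fmapS G V).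
Proof.
rewrite /rS /fmapS /=; congr Smp.
elim: (sarr V) => //= f s IH; case H: (idb f) => /=; last by rewrite IH.
by rewrite (idb_farr H) /= IH.
Qed.

Lemma alpha_fmapS_rS V i : alpha (fmapS G (rS V)) (alpha V i) = alpha (fmapS G V) i.
Proof.
rewrite /alpha /fmapS /=.
elim: (sarr V) i => [|f s IH] [|i] //=; first by rewrite take0.
by case H: (idb f) => /=; rewrite ?(idb_farr H) /= IH.
Qed.

End FunctorReduction.

Section Subdivision.
Variables (C D : Cat) (F : Functor C D).
Implicit Types X Y Z : Simplex C.

Lemma sd_sectionE X sg : sd_section F X sg = alpha_section (fmapS F X) sg.
Proof. by rewrite /sd_section /alpha_section dim_fmapS. Qed.

Lemma Sd_ob X : is_simplex X -> nondeg (rS (fmapS F X)).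
Proof. by move=> HX; exact/nondeg_rS/fmapS_simplex. Qed.

Lemma sd_section_exists X : exists sg, sd_section F X sg.
Proof. by have [sg S] := alpha_section_exists (fmapS F X); exists sg; rewrite sd_sectionE. Qed.

Lemma is_mor_SdMor X Y xi sg : is_simplex X -> is_mor X Y xi -> sd_section F X sg ->
  is_mor (rS (fmapS F X)) (rS (fmapS F Y)) (SdMor F Y xi sg).
Proof.
rewrite sd_sectionE => HX M S; have [_ HY _ _] := M.
have MS := is_mor_section (fmapS_simplex F HX) S.
exact: is_mor_comp (is_mor_comp MS (is_mor_fmapS F M)) (is_mor_alpha (fmapS_simplex F HY)).
Qed.

Lemma SdMor_sim X Y xi xi' sg sg' : is_simplex X -> is_simplex Y -> sim X Y xi xi' ->
  sd_section F X sg -> sd_section F X sg' ->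
  sim (rS (fmapS F X)) (rS (fmapS F Y)) (SdMor F Y xi sg) (SdMor F Y xi' sg').
Proof.
rewrite !sd_sectionE => HX HY H S S'.
have HFX := fmapS_simplex F HX; have MA := is_mor_alpha (fmapS_simplex F HY).
have SF := sim_fmapS F H; have [_ Mxi'] := sim_is_mor SF.
apply: sim_trans (sim_postcomp (sim_precomp (is_mor_section HFX S) SF) MA) _.
exact: sim_postcomp (sim_postcomp (sim_alpha_section HFX S S') Mxi') MA.
Qed.

Lemma SdMor_id X sg : is_simplex X -> sd_section F X sg ->
  sim (rS (fmapS F X)) (rS (fmapS F X)) (SdMor F X id sg) id.
Proof.
move=> HX S; apply: sim_ext; first exact: is_mor_SdMor (is_mor_id HX) S.
by move: S; rewrite sd_sectionE => -[].
Qed.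

(* [sgY \o alpha ~ id] on [F o Y] is inserted between [xi] and [eta]. *)
Lemma SdMor_comp X Y Z xi eta sgX sgY : is_simplex X -> is_simplex Y -> is_simplex Z ->
  is_mor X Y xi -> is_mor Y Z eta -> sd_section F X sgX -> sd_section F Y sgY ->
  sim (rS (fmapS F X)) (rS (fmapS F Z))
      (SdMor F Z (eta \o xi) sgX) (SdMor F Z eta sgY \o SdMor F Y xi sgX).
Proof.
rewrite !sd_sectionE => HX HY HZ Mxi Meta SX SY.
have HFY := fmapS_simplex F HY.
have M1 : is_mor (rS (fmapS F X)) (fmapS F Y) (xi \o sgX).
  exact: is_mor_comp (is_mor_section (fmapS_simplex F HX) SX) (is_mor_fmapS F Mxi).
have M2 : is_mor (fmapS F Y) (rS (fmapS F Z)) (alpha (fmapS F Z) \o eta).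
  exact: is_mor_comp (is_mor_fmapS F Meta) (is_mor_alpha (fmapS_simplex F HZ)).
exact/sim_sym/(sim_postcomp (sim_precomp M1 (sim_section_alpha HFY SY)) M2).
Qed.

End Subdivision.

Lemma Sd_id_ob (C : Cat) (X : Simplex C) : nondeg X -> rS (fmapS (Fid C) X) = X.
Proof. by move=> NX; rewrite fmapS_id rS_id. Qed.

Lemma SdMor_Fid (C : Cat) (X Y : Simplex C) xi sg : nondeg X -> nondeg Y ->
  is_mor X Y xi -> sd_section (Fid C) X sg -> sim X Y (SdMor (Fid C) Y xi sg) xi.
Proof.
move=> NX NY M [[_ bd] hs]; apply: sim_sym; apply: sim_ext => // i hi.
move: bd hs; rewrite /SdMor !fmapS_id (rS_id NX) => bd hs.
have E : sg i = i by rewrite -{2}(hs i hi) (alpha_id_of_nondeg (nondeg_arrow NX)) ?bd.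
have [_ _ [_ bx] _] := M.
by rewrite E (alpha_id_of_nondeg (nondeg_arrow NY)) ?bx.
Qed.

Lemma Sd_comp_ob (C D E : Cat) (F : Functor C D) (G : Functor D E) (X : Simplex C) :
  rS (fmapS (Fcomp G F) X) = rS (fmapS G (rS (fmapS F X))).
Proof. by rewrite fmapS_comp rS_fmapS_rS. Qed.

(* The chosen sections compose to a section [sg1 \o sg2] for [G o F], so by rigidity
   both sides are [alpha \o xi] precomposed with equivalent sections. *)
Lemma SdMor_Fcomp (C D E : Cat) (F : Functor C D) (G : Functor D E) (X Y : Simplex C)
    xi sg sg1 sg2 : is_simplex X -> is_simplex Y -> is_mor X Y xi ->
  sd_section (Fcomp G F) X sg -> sd_section F X sg1 ->
  sd_section G (rS (fmapS F X)) sg2 ->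
  sim (rS (fmapS (Fcomp G F) X)) (rS (fmapS (Fcomp G F) Y))
      (SdMor (Fcomp G F) Y xi sg) (SdMor G (rS (fmapS F Y)) (SdMor F Y xi sg1) sg2).
Proof.
rewrite !sd_sectionE => HX HY M S S1 S2.
have HW := fmapS_simplex (Fcomp G F) HX.
have Ssec : sim (rS (fmapS (Fcomp G F) X)) (fmapS (Fcomp G F) X) sg (sg1 \o sg2).
  apply: sim_of_alpha_eq => //.
  - exact: is_mor_section.
  - have MS1 := is_mor_section (fmapS_simplex F HX) S1.
    have MS2 := is_mor_section (fmapS_simplex G (rS_simplex (fmapS_simplex F HX))) S2.
    by have := is_mor_comp MS2 (is_mor_fmapS G MS1); rewrite rS_fmapS_rS fmapS_comp.
  - move=> j hj; have [[_ b2] h2] := S2.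
    have hj' : j <= dim (rS (fmapS G (rS (fmapS F X)))) by rewrite -Sd_comp_ob.
    rewrite (proj2 S) //= fmapS_comp -alpha_fmapS_rS (proj2 S1) ?h2 //.
    by move: (b2 j hj'); rewrite dim_fmapS.
have Mxi := is_mor_fmapS (Fcomp G F) M.
apply: (sim_extl (sim_extr (sim_postcomp (sim_postcomp Ssec Mxi)
  (is_mor_alpha (fmapS_simplex (Fcomp G F) HY))) _)) => // i hi /=.
by rewrite /SdMor fmapS_comp -alpha_fmapS_rS.
Qed.

Theorem lemma23 :
  (forall (C D : Cat) (F : Functor C D),
     (forall X : Simplex C, nondeg X -> nondeg (rS (fmapS F X))) /\
     (forall X : Simplex C, nondeg X -> exists sg, sd_section F X sg) /\
     (forall (X Y : Simplex C) (xi sg : nat -> nat),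
        nondeg X -> nondeg Y -> is_mor X Y xi -> sd_section F X sg ->
        is_mor (rS (fmapS F X)) (rS (fmapS F Y)) (SdMor F Y xi sg)) /\
     (forall (X Y : Simplex C) (xi xi' sg sg' : nat -> nat),
        nondeg X -> nondeg Y -> sim X Y xi xi' ->
        sd_section F X sg -> sd_section F X sg' ->
        sim (rS (fmapS F X)) (rS (fmapS F Y)) (SdMor F Y xi sg) (SdMor F Y xi' sg')) /\
     (forall (X : Simplex C) (sg : nat -> nat),
        nondeg X -> sd_section F X sg ->
        sim (rS (fmapS F X)) (rS (fmapS F X)) (SdMor F X (fun i => i) sg) (fun i => i)) /\
     (forall (X Y Z : Simplex C) (xi eta sgX sgY : nat -> nat),
        nondeg X -> nondeg Y -> nondeg Z -> is_mor X Y xi -> is_mor Y Z eta ->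
        sd_section F X sgX -> sd_section F Y sgY ->
        sim (rS (fmapS F X)) (rS (fmapS F Z))
            (SdMor F Z (eta \o xi) sgX) (SdMor F Z eta sgY \o SdMor F Y xi sgX)))
  /\
  (forall C : Cat,
     (forall X : Simplex C, nondeg X -> rS (fmapS (Fid C) X) = X) /\
     (forall (X Y : Simplex C) (xi sg : nat -> nat),
        nondeg X -> nondeg Y -> is_mor X Y xi -> sd_section (Fid C) X sg ->
        sim X Y (SdMor (Fid C) Y xi sg) xi))
  /\
  (forall (C D E : Cat) (F : Functor C D) (G : Functor D E),
     (forall X : Simplex C, nondeg X ->
        rS (fmapS (Fcomp G F) X) = rS (fmapS G (rS (fmapS F X)))) /\
     (forall (X Y : Simplex C) (xi sg sg1 sg2 : nat -> nat),
        nondeg X -> nondeg Y -> is_mor X Y xi ->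
        sd_section (Fcomp G F) X sg -> sd_section F X sg1 ->
        sd_section G (rS (fmapS F X)) sg2 ->
        sim (rS (fmapS (Fcomp G F) X)) (rS (fmapS (Fcomp G F) Y))
            (SdMor (Fcomp G F) Y xi sg)
            (SdMor G (rS (fmapS F Y)) (SdMor F Y xi sg1) sg2))).
Proof.
split; [|split].
- move=> C D F; refine (conj _ (conj _ (conj _ (conj _ (conj _ _))))).
  + by move=> X [HX _]; exact: Sd_ob.
  + by move=> X _; exact: sd_section_exists.
  + by move=> X Y xi sg [HX _] _; exact: is_mor_SdMor.
  + by move=> X Y xi xi' sg sg' [HX _] [HY _]; exact: SdMor_sim.
  + by move=> X sg [HX _]; exact: SdMor_id.
  + by move=> X Y Z xi eta sgX sgY [HX _] [HY _] [HZ _]; exact: SdMor_comp.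
- by move=> C; split; [exact: Sd_id_ob | exact: SdMor_Fid].
- move=> C D E F G; split=> [X _|X Y xi sg sg1 sg2 [HX _] [HY _]]; first exact: Sd_comp_ob.
  exact: SdMor_Fcomp.
Qed.
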